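(* Let $\Lambda=(W_j,\Lambda_j,v_j)_{j\in\mathbb{J}}$ be a Parseval g-fusion frame for $H$, let $\mathbb{I}$ be a finite subset of $\mathbb{J}$, and define $S_{\mathbb{I}}f:=\sum_{j\in\mathbb{I}}v_j^2\pi_{W_j}\Lambda_j^*\Lambda_j\pi_{W_j}f$ for $f\in H$. Then $$0\le S_{\mathbb{I}}-S_{\mathbb{I}}^2\le\frac14\,id_H$$ in the order of self-adjoint operators.
   Context: $H$ is a separable Hilbert space, $\mathbb{J}\subseteq\mathbb{Z}$, $\{H_j\}_{j\in\mathbb{J}}$ are separable Hilbert spaces, $\Lambda_j\in\mathcal{B}(H,H_j)$, $W_j$ are closed subspaces of $H$, $v_j>0$, and $\pi_V$ denotes the orthogonal projection onto a closed subspace $V$. The triple $\Lambda=(W_j,\Lambda_j,v_j)$ is a Parseval g-fusion frame for $H$ if $\sum_{j\in\mathbb{J}}v_j^2\Vert\Lambda_j\pi_{W_j}f\Vert^2=\Vert f\Vert^2$ for all $f\in H$. For self-adjoint $T,U$, $T\le U$ means $\langle Tf,f\rangle\le\langle Uf,f\rangle$ for all $f$. *)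

From HB Require Import structures.
From mathcomp Require Import all_boot all_order all_algebra.
From mathcomp Require Import complex.
From mathcomp Require Import all_classical all_reals.
From mathcomp Require Import esum.
Set Implicit Arguments. Unset Strict Implicit. Unset Printing Implicit Defensive.
Import Order.TTheory GRing.Theory Num.Theory.
Local Open Scope ring_scope.
Local Open Scope classical_set_scope.

Section Hilbert.
Variable R : realType.
Local Notation C := (R[i]).

Definition is_inner_product (V : lmodType C) (ip : V -> V -> C) : Prop :=
  [/\ (forall x y z, ip (x + y) z = ip x z + ip y z),
      (forall (a : C) x y, ip (a *: x) y = a * ip x y),
      (forall x y, ip y x = Num.conj (ip x y)),
      (forall x, 0 <= ip x x) &
      (forall x, ip x x = 0 -> x = 0)].

Definition ipnorm (V : lmodType C) (ip : V -> V -> C) (x : V) : R :=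
  Num.sqrt (complex.Re (ip x x)).

Definition ip_cauchy (V : lmodType C) (ip : V -> V -> C) (u : nat -> V) :=
  forall eps : R, 0 < eps -> exists N : nat, forall m n : nat,
    (N <= m)%N -> (N <= n)%N -> ipnorm ip (u m - u n) < eps.

Definition ip_converges (V : lmodType C) (ip : V -> V -> C) (u : nat -> V) (l : V) :=
  forall eps : R, 0 < eps -> exists N : nat, forall n : nat,
    (N <= n)%N -> ipnorm ip (u n - l) < eps.

Definition ip_complete (V : lmodType C) (ip : V -> V -> C) :=
  forall u : nat -> V, ip_cauchy ip u -> exists l, ip_converges ip u l.

Definition ip_separable (V : lmodType C) (ip : V -> V -> C) :=
  exists d : nat -> V, forall (x : V) (eps : R), 0 < eps ->
    exists n : nat, ipnorm ip (x - d n) < eps.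

Definition separable_hilbert (V : lmodType C) (ip : V -> V -> C) : Prop :=
  [/\ is_inner_product ip, ip_complete ip & ip_separable ip].

Definition bounded_linear (V W : lmodType C) (ipV : V -> V -> C)
  (ipW : W -> W -> C) (T : V -> W) : Prop :=
  (forall (a : C) x y, T (a *: x + y) = a *: T x + T y) /\
  exists M : R, forall x, ipnorm ipW (T x) <= M * ipnorm ipV x.

Definition is_adjoint (V W : lmodType C) (ipV : V -> V -> C)
  (ipW : W -> W -> C) (T : V -> W) (Ts : W -> V) : Prop :=
  forall x y, ipW (T x) y = ipV x (Ts y).

Definition closed_subspace (V : lmodType C) (ip : V -> V -> C) (Wsp : set V) :=
  [/\ Wsp 0, (forall x y, Wsp x -> Wsp y -> Wsp (x + y)),
      (forall (a : C) x, Wsp x -> Wsp (a *: x)) &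
      (forall u l, (forall n, Wsp (u n)) -> ip_converges ip u l -> Wsp l)].

Definition is_orth_proj (V : lmodType C) (ip : V -> V -> C) (Wsp : set V)
  (P : V -> V) : Prop :=
  forall f, Wsp (P f) /\ (forall w, Wsp w -> ip (f - P f) w = 0).

Definition op_le (V : lmodType C) (ip : V -> V -> C) (T U : V -> V) : Prop :=
  forall f, ip (T f) f <= ip (U f) f.

End Hilbert.

From mathcomp Require Import all_boot all_order all_algebra.
From mathcomp Require Import complex.
From mathcomp Require Import all_classical all_reals.
From mathcomp Require Import esum.
From mathcomp Require Import ring lra.
Import Order.TTheory GRing.Theory Num.Theory.
Local Open Scope ring_scope.
Local Open Scope classical_set_scope.
Local Open Scope complex_scope.

(* Let [S] be the partial frame operator.  The form [B x y := <S x, y>] equals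
   [sum_(j in I) v_j^2 <L_j P_j x, L_j P_j y>], so it is hermitian positive
   semidefinite, and Parseval bounds the finite sum: [B x x <= ||x||^2].  For a
   fixed [f] put [a := B f f], [s := ||S f||^2], [n := ||f||^2]; then
   [<(S - S^2) f, f> = a - s].  Since [s = B f (S f)], Cauchy-Schwarz for [B]
   gives [s^2 <= a B (S f) (S f) <= a s], so [s <= a]; Cauchy-Schwarz in [H]
   gives [a^2 <= s n], so [a - s <= a - a^2 / n <= n / 4]. *)

Section ComplexReal.
Context {R : realType}.

Lemma ger0_ReC (z : R[i]) : 0 <= z -> (complex.Re z)%:C = z.
Proof. by move/ger0_real/RRe_real. Qed.

Lemma conj_realC (r : R) : Num.conj r%:C = r%:C.
Proof. by apply: conj_Creal; rewrite complex_real. Qed.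

End ComplexReal.

Definition psd_hermitian {R : realType} {V : lmodType R[i]} (B : V -> V -> R[i]) :=
  [/\ (forall x y z, B (x + y) z = B x z + B y z),
      (forall (a : R[i]) x y, B (a *: x) y = a * B x y),
      (forall x y, B y x = Num.conj (B x y)) &
      (forall x, 0 <= B x x)].

Section PsdHermitianForm.
Context {R : realType} {V : lmodType R[i]} {B : V -> V -> R[i]}.
Hypothesis hB : psd_hermitian B.

Lemma formDl x y z : B (x + y) z = B x z + B y z. Proof. by case: hB. Qed.
Lemma formZl (a : R[i]) x y : B (a *: x) y = a * B x y. Proof. by case: hB. Qed.
Lemma formC x y : B y x = Num.conj (B x y). Proof. by case: hB. Qed.
Lemma form_ge0 x : 0 <= B x x. Proof. by case: hB. Qed.

Lemma formDr x y z : B x (y + z) = B x y + B x z.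
Proof. by rewrite (formC (y + z)) (formC y) (formC z) formDl rmorphD. Qed.

Lemma formZr (a : R[i]) x y : B x (a *: y) = Num.conj a * B x y.
Proof. by rewrite (formC (a *: y)) (formC y) formZl rmorphM. Qed.

Lemma form0l y : B 0 y = 0.
Proof. by rewrite -(scale0r 0) formZl mul0r. Qed.

Lemma formBl x y z : B (x - y) z = B x z - B y z.
Proof. by rewrite formDl -scaleN1r formZl mulN1r. Qed.

Lemma form_suml (T : Type) (r : seq T) (F : T -> V) y :
  B (\sum_(j <- r) F j) y = \sum_(j <- r) B (F j) y.
Proof.
elim: r => [|j r IH]; first by rewrite !big_nil form0l.
by rewrite !big_cons formDl IH.
Qed.

Lemma form_combination al be x y :
  B (al *: x + be *: y) (al *: x + be *: y) =
  al * Num.conj al * B x x + al * Num.conj be * B x y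
  + be * Num.conj al * Num.conj (B x y) + be * Num.conj be * B y y.
Proof. by rewrite formDl !formZl !formDr !formZr -(formC x y); ring. Qed.

(* With [a = B x x], [b = B x y], [c = B y y]: positivity at
   [al x + be y] for [(al, be) = (c, -b)] gives [c (c a - |b|^2) >= 0], which
   settles [c > 0]; if [c = 0], the choices [(-b^*, a)] and [(1, -b)] give
   [a |b|^2 <= 0] and [2 |b|^2 <= a], so [b = 0]. *)
Lemma cauchy_schwarz x y : B x y * Num.conj (B x y) <= B x x * B y y.
Proof.
set b := B x y.
pose a := complex.Re (B x x); pose c := complex.Re (B y y).
pose k := complex.Re (b * Num.conj b).
have hA : B x x = a%:C by rewrite ger0_ReC ?form_ge0.
have hC : B y y = c%:C by rewrite ger0_ReC ?form_ge0.
have hK : b * Num.conj b = k%:C by rewrite ger0_ReC ?mul_conjC_ge0.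
have a0 : 0 <= a by rewrite -ler0c -hA form_ge0.
have c0 : 0 <= c by rewrite -ler0c -hC form_ge0.
have nonneg al be : 0 <= B (al *: x + be *: y) (al *: x + be *: y) := form_ge0 _.
have h1 : 0 <= c * (c * a - k).
  move: (nonneg c%:C (- b)); rewrite form_combination -/b hA hC !rmorphN conj_realC.
  suff -> : c%:C * c%:C * a%:C + c%:C * - Num.conj b * b + - b * c%:C * Num.conj b
    + - b * - Num.conj b * c%:C = (c * (c * a - k))%:C by rewrite ler0c.
  by rewrite !rmorphM rmorphB /= !rmorphM /= -hK; ring.
have h2 : 0 <= a * (a * c - k).
  move: (nonneg (- Num.conj b) a%:C).
  rewrite form_combination -/b hA hC !rmorphN conj_realC /= conjCK.
  suff -> : - Num.conj b * - b * a%:C + - Num.conj b * a%:C * b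
    + a%:C * - b * Num.conj b + a%:C * a%:C * c%:C = (a * (a * c - k))%:C.
    by rewrite ler0c.
  by rewrite !rmorphM rmorphB /= !rmorphM /= -hK; ring.
have h3 : 0 <= a - 2 * k + k * c.
  move: (nonneg 1 (- b)); rewrite form_combination -/b hA hC !rmorphN rmorph1.
  suff -> : 1 * 1 * a%:C + 1 * - Num.conj b * b + - b * 1 * Num.conj b
    + - b * - Num.conj b * c%:C = (a - 2 * k + k * c)%:C by rewrite ler0c.
  by rewrite rmorphD rmorphB !rmorphM /= -hK; ring.
rewrite hK hA hC -rmorphM lecR.
have [c_gt0|c_le0] := ltrP 0 c; first nra.
have c_eq0 : c = 0 by apply/le_anti/andP.
by rewrite c_eq0 in h1 h2 h3 *; nra.
Qed.
End PsdHermitianForm.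

Section InnerProduct.
Context {R : realType} {V : lmodType R[i]} {ip : V -> V -> R[i]}.
Context {W : set V} {P : V -> V}.
Hypothesis hip : is_inner_product ip.

Lemma inner_product_psd : psd_hermitian ip.
Proof. by case: hip. Qed.

Lemma ip_eq0 x : ip x x = 0 -> x = 0.
Proof. by case: hip => _ _ _ _; apply. Qed.

Lemma ipnormE x : ip x x = (ipnorm ip x ^+ 2)%:C.
Proof.
have ip_ge0 : 0 <= ip x x := form_ge0 inner_product_psd x.
have Re_ge0 : 0 <= complex.Re (ip x x) by rewrite -ler0c ger0_ReC.
by rewrite /ipnorm sqr_sqrtr // ger0_ReC.
Qed.

Hypothesis hP : is_orth_proj ip W P.

Lemma orth_projE x w : W w -> ip (P x) w = ip x w.
Proof.
move=> Ww; have [_ /(_ w Ww) orth] := hP x.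
by apply/eqP; rewrite eq_sym -subr_eq0 -(formBl inner_product_psd) orth.
Qed.

Lemma orth_proj_selfadj x y : ip (P x) y = ip x (P y).
Proof.
have hB := inner_product_psd; have [Wx _] := hP x; have [Wy _] := hP y.
by rewrite (formC hB) -orth_projE // -(formC hB) orth_projE.
Qed.

(* [d] below lies in [W] and is orthogonal to [W], hence vanishes. *)
Lemma orth_proj_linear : closed_subspace ip W -> linear P.
Proof.
case=> _ WD WZ _ a x y; have hB := inner_product_psd.
have WP z : W (P z) by have [] := hP z.
set d := P (a *: x + y) - (a *: P x + P y).
have Wd : W d by rewrite /d -scaleN1r; apply/WD/WZ/WD/WP/WZ/WP.
apply/eqP; rewrite -subr_eq0 -/d; apply/eqP/ip_eq0.
rewrite {1}/d (formBl hB) (formDl hB) (formZl hB) !orth_projE //.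
by rewrite (formDl hB) (formZl hB) subrr.
Qed.

End InnerProduct.

Lemma sum_le_esum (R : realType) (T : choiceType) (J : set T) (F : T -> R)
    (r : seq T) :
  uniq r -> (forall j, j \in r -> J j) ->
  ((\sum_(j <- r) F j)%:E <= \esum_(j in J) (F j)%:E)%E.
Proof.
move=> r_uniq rJ; apply: esum_ge; exists [set` r].
  by split; [exact: finite_seq | move=> j /= /rJ].
by rewrite ereal.fsumEFin ?finite_seq // fsbig_seq.
Qed.

Lemma sub_le_quarter (R : realFieldType) (a s n : R) :
  0 <= s -> 0 <= n -> s ^+ 2 <= a * s -> a ^+ 2 <= s * n ->
  0 <= a - s <= n / 4.
Proof.
move=> s0 n0 ssa aasn; apply/andP; split.
  have [s_gt0|s_le0] := ltrP 0 s; first nra.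
  have s_eq0 : s = 0 by apply/le_anti/andP.
  by rewrite s_eq0 in aasn *; nra.
have [n_gt0|n_le0] := ltrP 0 n; first by have := sqr_ge0 (n - 2 * a); nra.
have n_eq0 : n = 0 by apply/le_anti/andP.
by rewrite n_eq0 in aasn *; nra.
Qed.

Section PartialFrameOperator.
Context {R : realType} {T : eqType} {H : lmodType R[i]} {ipH : H -> H -> R[i]}.
Context {Hj : T -> lmodType R[i]} {ipj : forall j, Hj j -> Hj j -> R[i]}.
Context {P : T -> H -> H} {L : forall j, H -> Hj j} {Ls : forall j, Hj j -> H}.
Context {v : T -> R} {I : seq T}.

Hypothesis hipH : is_inner_product ipH.
Hypothesis hipj : forall j, j \in I -> is_inner_product (ipj j).
Hypothesis L_linear : forall j, j \in I -> linear (L j).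
Hypothesis L_adjoint : forall j, j \in I -> is_adjoint ipH (ipj j) (L j) (Ls j).
Hypothesis P_linear : forall j, j \in I -> linear (P j).
Hypothesis P_selfadj : forall j, j \in I -> forall x y, ipH (P j x) y = ipH x (P j y).

Definition frame_op (f : H) : H :=
  \sum_(j <- I) ((v j) ^+ 2)%:C *: P j (Ls j (L j (P j f))).

Definition frame_form (x y : H) : R[i] :=
  \sum_(j <- I) ((v j) ^+ 2)%:C * ipj j (L j (P j x)) (L j (P j y)).

Definition frame_energy (f : H) : R :=
  \sum_(j <- I) v j ^+ 2 * ipnorm (ipj j) (L j (P j f)) ^+ 2.

Lemma frame_opE x y : ipH (frame_op x) y = frame_form x y.
Proof.
have hH := inner_product_psd hipH.
rewrite (form_suml hH); apply: eq_big_seq => j jI.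
by rewrite (formZl hH) P_selfadj // (formC hH) -L_adjoint //
  -(formC (inner_product_psd (hipj j jI))).
Qed.

Lemma frame_form_psd : psd_hermitian frame_form.
Proof.
have LP_linear j : j \in I -> linear (fun x => L j (P j x)).
  by move=> jI a x y; rewrite P_linear // L_linear.
have hj j (jI : j \in I) := inner_product_psd (hipj j jI).
split=> [x y z|a x y|x y|x].
- rewrite -big_split; apply: eq_big_seq => j jI /=.
  by rewrite (GRing.semilinear_linear (LP_linear j jI)).2 (formDl (hj j jI)) mulrDr.
- rewrite mulr_sumr; apply: eq_big_seq => j jI /=.
  by rewrite (GRing.semilinear_linear (LP_linear j jI)).1 (formZl (hj j jI)) mulrCA.
- rewrite rmorph_sum; apply: eq_big_seq => j jI /=.
  by rewrite (rmorphM Num.conj) /= conj_realC -(formC (hj j jI)).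
- rewrite /frame_form big_seq; apply: sumr_ge0 => j jI.
  by rewrite mulr_ge0 ?ler0c ?sqr_ge0 ?(form_ge0 (hj j jI)).
Qed.

Lemma frame_form_diag f : frame_form f f = (frame_energy f)%:C.
Proof.
rewrite rmorph_sum; apply: eq_big_seq => j jI.
by rewrite (ipnormE (hipj j jI)) -rmorphM.
Qed.

Lemma frame_op_diag f : ipH (frame_op f) f = (frame_energy f)%:C.
Proof. by rewrite frame_opE frame_form_diag. Qed.

Lemma frame_op_sqr_diag f :
  ipH (frame_op (frame_op f)) f = (ipnorm ipH (frame_op f) ^+ 2)%:C.
Proof.
by rewrite frame_opE (formC frame_form_psd) -frame_opE (ipnormE hipH) conj_realC.
Qed.

Hypothesis frame_energy_le : forall f, frame_energy f <= ipnorm ipH f ^+ 2.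

Lemma frame_op_gap f :
  0 <= frame_energy f - ipnorm ipH (frame_op f) ^+ 2 <= ipnorm ipH f ^+ 2 / 4.
Proof.
have hH := inner_product_psd hipH.
set S := frame_op; set a := frame_energy f.
set s := ipnorm ipH (S f) ^+ 2; set n := ipnorm ipH f ^+ 2.
have SfSf : frame_form f (S f) = s%:C by rewrite -frame_opE (ipnormE hipH).
have a_ge0 : 0 <= a by rewrite -ler0c -frame_form_diag (form_ge0 frame_form_psd).
apply: sub_le_quarter; rewrite ?sqr_ge0 //.
- have := cauchy_schwarz frame_form_psd f (S f).
  rewrite SfSf conj_realC !frame_form_diag -!rmorphM lecR => /le_trans; apply.
  exact/ler_wpM2l/frame_energy_le.
- have := cauchy_schwarz hH (S f) f.
  by rewrite frame_op_diag conj_realC !(ipnormE hipH) -!rmorphM lecR.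
Qed.

Lemma frame_op_loewner :
  op_le ipH (fun f => 0) (fun f => frame_op f - frame_op (frame_op f)) /\
  op_le ipH (fun f => frame_op f - frame_op (frame_op f))
    (fun f => (1 / 4 : R[i]) *: f).
Proof.
have hH := inner_product_psd hipH.
have gapE f : ipH (frame_op f - frame_op (frame_op f)) f =
    (frame_energy f - ipnorm ipH (frame_op f) ^+ 2)%:C.
  by rewrite (formBl hH) frame_op_diag frame_op_sqr_diag rmorphB.
have quarterC : (1 / 4 : R[i]) = (1 / 4 : R)%:C.
  by rewrite rmorphM rmorph1 fmorphV rmorph_nat.
split=> f; have /andP[gap_ge0 gap_le] := frame_op_gap f; rewrite /= gapE.
  by rewrite (form0l hH) ler0c.
by rewrite (formZl hH) (ipnormE hipH) quarterC -rmorphM lecR mul1r mulrC.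
Qed.

End PartialFrameOperator.

Theorem corollary3p2 (R : realType)
  (H : lmodType R[i]) (ipH : H -> H -> R[i])
  (Hj : int -> lmodType R[i]) (ipj : forall j : int, Hj j -> Hj j -> R[i])
  (J : set int)
  (W : int -> set H) (P : int -> H -> H)
  (L : forall j : int, H -> Hj j) (Ls : forall j : int, Hj j -> H)
  (v : int -> R) :
  separable_hilbert ipH ->
  (forall j, J j -> separable_hilbert (ipj j)) ->
  (forall j, J j -> bounded_linear ipH (ipj j) (L j)) ->
  (forall j, J j -> is_adjoint ipH (ipj j) (L j) (Ls j)) ->
  (forall j, J j -> closed_subspace ipH (W j)) ->
  (forall j, J j -> is_orth_proj ipH (W j) (P j)) ->
  (forall j, J j -> 0 < v j) ->
  (* Parseval g-fusion frame *)
  (forall f : H,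
     (\esum_(j in J) ((v j) ^+ 2 * (ipnorm (ipj j) (L j (P j f))) ^+ 2)%:E)%E
     = ((ipnorm ipH f) ^+ 2)%:E) ->
  forall I : seq int, uniq I -> (forall j, j \in I -> J j) ->
  let S : H -> H := fun f =>
    \sum_(j <- I) ((v j) ^+ 2)%:C *: P j (Ls j (L j (P j f))) in
  op_le ipH (fun f => 0) (fun f => S f - S (S f)) /\
  op_le ipH (fun f => S f - S (S f)) (fun f => (1 / 4 : R[i]) *: f).
Proof.
move=> [hH _ _] hHj hL hLs hW hP _ parseval I I_uniq IJ S.
apply: (@frame_op_loewner R int H ipH Hj ipj P L Ls v I hH)
  => [j /IJ/hHj[] | j /IJ/hL[] | j /IJ/hLs | | | f] //.
- by move=> j /IJ jJ; exact: orth_proj_linear hH (hP j jJ) (hW j jJ).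
- by move=> j /IJ jJ; exact: orth_proj_selfadj hH (hP j jJ).
- by rewrite -lee_fin -parseval sum_le_esum.
Qed.
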